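(* Let $P$ be an $r$-differential poset and $P'$ an $r'$-differential poset, and let $p''_n$ be the number of rank-$n$ elements of the Cartesian product $P\times P'$ (with $p''_k=0$ for $k<0$ and $\Delta p''_n=p''_n-p''_{n-1}$). Then for every $n\ge1$ and $1\le j\le n$ one has $\Delta p''_n\ge \Delta p''_{n-j}$; that is, $\Delta p''_1\le\Delta p''_2\le\cdots$.
   Context: An $r$-differential poset ($r$ a positive integer) is a graded poset with a minimum element, finite intervals and finite rank sets, such that an element covering exactly $m$ elements is covered by exactly $m+r$ elements, and two distinct elements that both cover exactly $m$ common elements are both covered by exactly $m$ common elements. The Cartesian product $P\times P'$ carries the componentwise order and rank function equal to the sum of ranks; it is an $(r+r')$-differential poset. *)

From mathcomp Require Import all_boot all_order all_algebra.
Set Implicit Arguments. Unset Strict Implicit. Unset Printing Implicit Defensive.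

Definition card_eq (T : eqType) (A : T -> Prop) (k : nat) : Prop :=
  exists s : seq T, uniq s /\ (forall x, A x <-> x \in s) /\ size s = k.

Section Poset.
Variables (T : eqType) (le : T -> T -> Prop).

Definition lt_ (x y : T) : Prop := le x y /\ x <> y.

Definition covby (x y : T) : Prop :=
  lt_ x y /\ ~ (exists z, lt_ x z /\ lt_ z y).

Definition is_partial_order : Prop :=
  [/\ (forall x, le x x),
      (forall x y, le x y -> le y x -> x = y) &
      (forall x y z, le x y -> le y z -> le x z)].

Definition graded_poset (rk : T -> nat) : Prop :=
  [/\ is_partial_order,
      (exists z, (forall x, le z x) /\ rk z = 0%N),
      (forall x y, covby x y -> rk y = (rk x).+1),
      (forall x y, exists k, card_eq (fun z => le x z /\ le z y) k) &
      (forall n, exists k, card_eq (fun x => rk x = n) k)].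

Definition differential_poset (rk : T -> nat) (r : nat) : Prop :=
  [/\ (0 < r)%N,
      graded_poset rk,
      (forall x m, card_eq (fun y => covby y x) m ->
                   card_eq (fun y => covby x y) (m + r)) &
      (forall x y m, x <> y ->
         card_eq (fun z => covby z x /\ covby z y) m ->
         card_eq (fun z => covby x z /\ covby y z) m)].
End Poset.

Definition prod_le (T T' : Type) (le : T -> T -> Prop) (le' : T' -> T' -> Prop)
  (u v : T * T') : Prop := le u.1 v.1 /\ le' u.2 v.2.
Definition prod_rk (T T' : Type) (rk : T -> nat) (rk' : T' -> nat)
  (u : T * T') : nat := (rk u.1 + rk' u.2)%N.

Definition delta (p : nat -> nat) (n : nat) : int :=
  (p n)%:Z - (if n is k.+1 then p k else 0%N)%:Z.

From mathcomp Require Import all_boot all_order all_algebra.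
From mathcomp Require Import zify boolp.
Import Order.TTheory GRing.Theory Num.Theory.
Set Implicit Arguments. Unset Strict Implicit. Unset Printing Implicit Defensive.

(* In an r-differential poset, let A be the incidence matrix of covers between
   ranks n and n+1 and B that between ranks n-1 and n.  The defining axioms say
   exactly A A^T = B B^T + r I (the matrix form of DU - UD = rI), so A has
   independent rows and the rank sizes p_n are nondecreasing.  The rank sizes
   of P x P' form the convolution p * p', and a backward difference of a
   convolution can be moved onto either factor, so the second difference of
   p'' is the convolution of the first differences of p and p', which are
   nonnegative. *)

Lemma sum_count_fibres (T : Type) (f : T -> nat) (m : nat) (s : seq T) :
  all (fun x => f x < m) s -> \sum_(k < m) count (fun x => f x == k) s = size s.
Proof.
elim: s => [|x s IHs] /=; first by rewrite big1.
case/andP=> fx_lt_m /IHs <-; rewrite big_split /= -add1n; congr (_ + _).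
rewrite (bigD1 (Ordinal fx_lt_m)) //= eqxx big1 // => k.
by rewrite -val_eqE /= eq_sym => /negbTE->.
Qed.

Section CardEq.
Variable T : eqType.
Implicit Types (A B : T -> Prop) (s : seq T).

Lemma card_eq_unique A k k' : card_eq A k -> card_eq A k' -> k = k'.
Proof.
move=> [s [s_uniq [sA <-]]] [s' [s'_uniq [s'A <-]]].
apply: perm_size; apply: uniq_perm => // x.
by apply/idP/idP => [/sA/s'A | /s'A/sA].
Qed.

Lemma eq_card_eq A B k : (forall x, A x <-> B x) -> card_eq A k -> card_eq B k.
Proof.
move=> AB [s [s_uniq [sA size_s]]]; exists s; split=> //; split=> // x.
by rewrite -AB.
Qed.

Lemma card_eq_count A s : uniq s -> (forall x, A x -> x \in s) ->
  card_eq A (count (fun x => `[< A x >]) s).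
Proof.
move=> s_uniq As; exists (filter (fun x => `[< A x >]) s).
rewrite filter_uniq // size_filter; split=> //; split=> // x.
rewrite mem_filter; split=> [Ax | /andP[/asboolP //]].
by rewrite As // andbT; apply/asboolP.
Qed.

Lemma card_eq_fibres A (f : T -> nat) (m N : nat) (c : nat -> nat) :
  card_eq A N -> (forall x, A x -> f x < m) ->
  (forall k, k < m -> card_eq (fun x => A x /\ f x = k) (c k)) ->
  N = \sum_(k < m) c k.
Proof.
move=> [w [w_uniq [wA <-]]] f_lt_m c_fibre.
rewrite -(@sum_count_fibres _ f m); last by apply/allP => x /wA /f_lt_m.
apply: eq_bigr => k _; apply: card_eq_unique (c_fibre k (ltn_ord k)).
rewrite -(@eq_in_count _ (fun x => `[< A x /\ f x = k >])) => [|x /wA Ax].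
  by apply: card_eq_count => // x [/wA].
by apply/asboolP/eqP => [[] | fx_k].
Qed.
End CardEq.

Lemma card_eq_prod (T T' : eqType) (A : T -> Prop) (A' : T' -> Prop) (k k' : nat) :
  card_eq A k -> card_eq A' k' -> card_eq (fun u : T * T' => A u.1 /\ A' u.2) (k * k').
Proof.
move=> [s [s_uniq [sA <-]]] [s' [s'_uniq [s'A <-]]].
exists [seq (x, y) | x <- s, y <- s']; rewrite size_allpairs allpairs_uniq //; last first.
  by move=> [? ?] [? ?].
split=> //; split=> // [[x y]]; rewrite /= sA s'A.
split=> [[xs ys] | /allpairsP[[x' y'] /= [xs ys [-> ->]]] //].
by apply/allpairsP; exists (x, y).
Qed.

Lemma card_rank_prod (T T' : eqType) (rk : T -> nat) (rk' : T' -> nat) (p p' q : nat -> nat) :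
  (forall n, card_eq (fun x => rk x = n) (p n)) ->
  (forall n, card_eq (fun x => rk' x = n) (p' n)) ->
  (forall n, card_eq (fun u : T * T' => prod_rk rk rk' u = n) (q n)) ->
  forall n, q n = \sum_(k < n.+1) p k * p' (n - k).
Proof.
move=> rank_card rank_card' prod_rank_card n.
apply: (card_eq_fibres (f := fun u : T * T' => rk u.1) (m := n.+1)
  (c := fun k => p k * p' (n - k)) (prod_rank_card n)).
  by rewrite /prod_rk => u <-; rewrite ltnS leq_addr.
move=> k k_le_n; apply: eq_card_eq (card_eq_prod (rank_card k) (rank_card' (n - k))).
by move=> u; rewrite /prod_rk; lia.
Qed.

Local Open Scope ring_scope.

Lemma mulmx_trmx_row (R : pzRingType) n (v : 'rV[R]_n) :
  (v *m v^T) 0 0 = \sum_i v 0 i ^+ 2.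
Proof. by rewrite mxE; apply: eq_bigr => i _; rewrite mxE. Qed.

Lemma mulmx_trmx_row_ge0 (R : realDomainType) n (v : 'rV[R]_n) :
  0 <= (v *m v^T) 0 0.
Proof. by rewrite mulmx_trmx_row sumr_ge0 // => i _; rewrite sqr_ge0. Qed.

Lemma mulmx_trmx_row_eq0 (R : realDomainType) n (v : 'rV[R]_n) :
  (v *m v^T) 0 0 = 0 -> v = 0.
Proof.
rewrite mulmx_trmx_row => /(psumr_eq0P (fun i _ => sqr_ge0 _)) v0.
by apply/rowP => i; rewrite mxE; apply/eqP; rewrite -sqrf_eq0 v0.
Qed.

(* If [A A^T = B B^T + c] with [c > 0], then [w A = 0] forces
   [|wB|^2 + c |w|^2 = 0], so [A] has independent rows. *)
Lemma rows_leq_cols_of_gram (R : realFieldType) m q u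
    (A : 'M[R]_(m, q)) (B : 'M[R]_(m, u)) (c : R) :
  0 < c -> A *m A^T = B *m B^T + c%:M -> (m <= q)%N.
Proof.
move=> c_gt0 AAt.
have kerA0 : kermx A = 0.
  apply/row_matrixP => i; rewrite row0; set w := row i _.
  have wA0 : w *m A = 0 by apply/sub_kermxP/row_sub.
  have : (w *m (A *m A^T) *m w^T) 0 0 = 0 by rewrite mulmxA wA0 !mul0mx mxE.
  rewrite AAt mulmxDr mulmxDl mul_mx_scalar -scalemxAl mxE [X in _ + X]mxE.
  rewrite !mulmxA -mulmxA -trmx_mul => /eqP.
  rewrite paddr_eq0 ?mulr_ge0 ?(ltW c_gt0) ?mulmx_trmx_row_ge0 //.
  by case/andP=> _; rewrite mulf_eq0 gt_eqF //= => /eqP/mulmx_trmx_row_eq0.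
have := mxrank_ker A; rewrite kerA0 mxrank0 => /esym/eqP; rewrite subn_eq0.
by move/leq_trans; apply; apply: rank_leq_col.
Qed.

Section IncidenceMatrix.
Variables (R : pzSemiRingType) (T : Type) (e : rel T).

Definition incidence_mx (s t : seq T) : 'M[R]_(size s, size t) :=
  \matrix_(i, j) (e (tnth (in_tuple s) i) (tnth (in_tuple t) j))%:R.

Lemma incidence_mx_gram (s t : seq T) i i' :
  let x := tnth (in_tuple s) in
  (incidence_mx s t *m (incidence_mx s t)^T) i i' =
  (count (fun y => e (x i) y && e (x i') y) t)%:R.
Proof.
rewrite /= mxE -sum1_count big_tnth natr_sum [RHS]big_mkcond /=.
by apply: eq_bigr => j _; rewrite !mxE -natrM mulnb; case: (_ && _).
Qed.
End IncidenceMatrix.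

Section DifferentialPosetRanks.
Variables (T : eqType) (le : T -> T -> Prop) (rk : T -> nat) (r : nat).
Hypothesis HP : differential_poset le rk r.

Definition coverb (x y : T) : bool := `[< covby le x y >].

Lemma covby_rank x y : covby le x y -> rk y = (rk x).+1.
Proof. by case: HP => _ [_ _ rk_covby _ _] _ _; apply: rk_covby. Qed.

Section CoverCounts.
Variables (x : T) (t u : seq T).
Hypotheses (t_uniq : uniq t) (u_uniq : uniq u).
Hypothesis t_up : forall y, rk y = (rk x).+1 -> y \in t.
Hypothesis u_down : forall y, (rk y).+1 = rk x -> y \in u.

Lemma count_up_covers : count (coverb x) t = (count (coverb^~ x) u + r)%N.
Proof.
case: HP => _ _ up_down _; apply: card_eq_unique (up_down x _ _).
  by apply: card_eq_count => // y /covby_rank/t_up.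
by apply: card_eq_count => // y /covby_rank/esym/u_down.
Qed.

Lemma count_common_up_covers x' : x <> x' ->
  count (fun y => coverb x y && coverb x' y) t =
  count (fun y => coverb y x && coverb y x') u.
Proof.
move=> x_neq_x'; case: HP => _ _ _ common.
have card_eq_and (P Q : T -> Prop) (s : seq T) : uniq s ->
    (forall y, P y -> y \in s) ->
    card_eq (fun y => P y /\ Q y) (count (fun y => `[< P y >] && `[< Q y >]) s).
  move=> s_uniq Ps; rewrite -(eq_count (fun y => asbool_and)).
  by apply: card_eq_count => // y [/Ps].
apply: card_eq_unique (common x x' _ x_neq_x' _).
  by apply: card_eq_and => // y /covby_rank/t_up.
by apply: card_eq_and => // y /covby_rank/esym/u_down.
Qed.
End CoverCounts.

Lemma rank_card_nondecreasing (p : nat -> nat) :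
  (forall n, card_eq (fun x => rk x = n) (p n)) -> forall n, (p n <= p n.+1)%N.
Proof.
move=> rank_card n.
have [s [s_uniq [s_rank <-]]] := rank_card n.
have [t [t_uniq [t_rank <-]]] := rank_card n.+1.
have [u [u_uniq [u_rank _]]] := rank_card n.-1.
pose A := @incidence_mx rat _ coverb s t.
pose B := @incidence_mx rat _ (fun x y => coverb y x) s u.
apply: (@rows_leq_cols_of_gram _ _ _ _ A B r%:R); first by rewrite ltr0n; case: HP.
apply/matrixP => i i'; rewrite [RHS]mxE !incidence_mx_gram mxE /=.
have rk_s : rk (tnth (in_tuple s) i) = n by apply/s_rank/mem_tnth.
have t_up y : rk y = (rk (tnth (in_tuple s) i)).+1 -> y \in t.
  by rewrite rk_s => /t_rank.
have u_down y : (rk y).+1 = rk (tnth (in_tuple s) i) -> y \in u.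
  by rewrite rk_s => rk_y; apply/u_rank; rewrite -rk_y.
case: eqVneq => [<- | i_neq_i'].
  rewrite mulr1n !(eq_count (fun y => andbb _)).
  by rewrite (count_up_covers t_uniq u_uniq t_up u_down) natrD.
rewrite mulr0n addr0 (count_common_up_covers t_uniq u_uniq t_up u_down) //.
by move=> /(elimT (tuple_uniqP (in_tuple s)) s_uniq)/eqP; rewrite (negbTE i_neq_i').
Qed.
End DifferentialPosetRanks.

Section Convolution.
Variable R : pzRingType.
Implicit Types f g : nat -> R.

Definition convn f g n : R := \sum_(k < n.+1) f k * g (n - k)%N.

Definition bdiff f n : R := f n - (if n is k.+1 then f k else 0).

Lemma bdiff_convl f g n : bdiff (convn f g) n = convn (bdiff f) g n.
Proof.
rewrite /bdiff /convn; case: n => [|n]; first by rewrite !big_ord1 !subr0.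
under [RHS]eq_bigr do rewrite mulrBl.
by rewrite sumrB [X in _ = _ - X]big_ord_recl /= mul0r add0r.
Qed.

Lemma bdiff_convr f g n : bdiff (convn f g) n = convn f (bdiff g) n.
Proof.
rewrite /bdiff /convn; case: n => [|n]; first by rewrite !big_ord1 !subr0.
under [RHS]eq_bigr do rewrite mulrBr.
rewrite sumrB [X in _ = _ - X]big_ord_recr /= subnn mulr0 addr0.
by congr (_ - _); apply: eq_bigr => k _; rewrite subSn // -ltnS.
Qed.
End Convolution.

Lemma convn_ge0 (R : numDomainType) (f g : nat -> R) n :
  (forall k, 0 <= f k) -> (forall k, 0 <= g k) -> 0 <= convn f g n.
Proof. by move=> f_ge0 g_ge0; apply: sumr_ge0 => k _; rewrite mulr_ge0. Qed.

Lemma bdiff_convn_nondecreasing (R : numDomainType) (f g : nat -> R) :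
  (forall k, 0 <= bdiff f k) -> (forall k, 0 <= bdiff g k) ->
  {homo bdiff (convn f g) : m n / (m <= n)%N >-> m <= n}.
Proof.
move=> f_incr g_incr; apply: Order.NatMonotonyTheory.nondecnP => m.
rewrite -subr_ge0 -[_ - _]/(bdiff (bdiff (convn f g)) m.+1).
have -> : bdiff (convn f g) = convn (bdiff f) g by apply: funext => k; apply: bdiff_convl.
by rewrite bdiff_convr convn_ge0.
Qed.

Lemma bdiff_nat_ge0 (p : nat -> nat) : (forall k, (p k <= p k.+1)%N) ->
  forall k, 0 <= bdiff (fun k => (p k)%:Z) k.
Proof. by move=> p_incr [|k]; rewrite /bdiff ?subr0 // subr_ge0 lez_nat. Qed.

Lemma rank_card_exists (T : eqType) (le : T -> T -> Prop) (rk : T -> nat) (r : nat) :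
  differential_poset le rk r ->
  exists p : nat -> nat, forall n, card_eq (fun x => rk x = n) (p n).
Proof. by case=> _ [_ _ _ _ /choice[p rank_card]] _ _; exists p. Qed.

Lemma delta_bdiff (p : nat -> nat) n : delta p n = bdiff (fun k => (p k)%:Z) n.
Proof. by case: n. Qed.

Theorem proposition4p4
  (T : eqType) (le : T -> T -> Prop) (rk : T -> nat) (r : nat)
  (HP : differential_poset le rk r)
  (T' : eqType) (le' : T' -> T' -> Prop) (rk' : T' -> nat) (r' : nat)
  (HP' : differential_poset le' rk' r')
  (p'' : nat -> nat)
  (Hp : forall n, card_eq (fun u : T * T' => prod_rk rk rk' u = n) (p'' n))
  (n j : nat) (Hn : (1 <= n)%N) (Hj : (1 <= j <= n)%N) :
  (delta p'' (n - j) <= delta p'' n)%R.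
Proof.
have [p rank_card] := rank_card_exists HP.
have [p' rank_card'] := rank_card_exists HP'.
have p''_convn : (fun m => (p'' m)%:Z) = convn (fun k => (p k)%:Z) (fun k => (p' k)%:Z).
  apply: funext => m; rewrite (card_rank_prod rank_card rank_card' Hp) /convn.
  by rewrite -natz natr_sum; apply: eq_bigr => k _; rewrite natrM !natz.
rewrite !delta_bdiff p''_convn; apply: bdiff_convn_nondecreasing; last exact: leq_subr.
- exact/bdiff_nat_ge0/(rank_card_nondecreasing HP rank_card).
- exact/bdiff_nat_ge0/(rank_card_nondecreasing HP' rank_card').
Qed.
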